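(* Let $\{\Delta_1,\dots,\Delta_r\}$ be a nef-partition of a reflexive polytope $\Delta$ with dual nef-partition $\{\nabla_1,\dots,\nabla_r\}$. Let $v$ be any lattice point of $\partial\Delta^*$ and $\Gamma(v)$ the minimal face of $\Delta^*$ containing $v$. Then $\Gamma(v)$ is a face of $\nabla_i$ for some $i\in\{1,\dots,r\}$.
   Context: Let $M\cong\mathbb Z^d$, $N=\mathrm{Hom}(M,\mathbb Z)$, $\langle\cdot,\cdot\rangle$ the pairing. A $d$-dimensional lattice polytope $\Delta\subset M_{\mathbb R}$ is reflexive if $\Delta=\{x:\langle x,e_k\rangle\ge-1,\ k=1,\dots,n\}$ with $e_k\in N$ the primitive inward facet normals; $\Delta^*=\mathrm{Conv}(e_1,\dots,e_n)$. A nef-partition of $\Delta$ is a Minkowski decomposition $\Delta=\Delta_1+\dots+\Delta_r$ into lattice polytopes with $\varphi_j(e_k)\in\{0,1\}$ for all $j,k$, where $\varphi_j(y)=-\min_{x\in\Delta_j}\langle x,y\rangle$. The dual nef-partition consists of $\nabla_j=\mathrm{Conv}(\{0\}\cup\{e_k:\varphi_j(e_k)=1\})\subset N_{\mathbb R}$; it is known that $\Delta^*=\mathrm{Conv}(\nabla_1\cup\dots\cup\nabla_r)$. *)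

(* real vector spaces M_R = N_R = 'rV[R]_d over R : realType,
   with M = N = Z^d (dual bases) and the pairing <x,y> = sum_i x_i y_i. *)
From HB Require Import structures.
From mathcomp Require Import all_boot all_order all_algebra.
From mathcomp Require Import reals.
Set Implicit Arguments. Unset Strict Implicit. Unset Printing Implicit Defensive.
Import Order.TTheory GRing.Theory Num.Theory.
Local Open Scope ring_scope.

Section Polytopes.
Variables (R : realType) (d : nat).

Definition pset := 'rV[R]_d -> Prop.

Definition pairing (x y : 'rV[R]_d) : R := \sum_(i < d) x ord0 i * y ord0 i.

Definition integral (x : 'rV[R]_d) : Prop :=
  forall i : 'I_d, exists z : int, x ord0 i = z%:~R.

Definition primitive (y : 'rV[R]_d) : Prop :=
  integral y /\ y != 0 /\
  forall m : nat, (1 < m)%N -> ~ integral ((m%:R)^-1 *: y).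

Definition conv (A : pset) : pset := fun x =>
  exists (n : nat) (p : 'I_n -> 'rV[R]_d) (w : 'I_n -> R),
    [/\ forall i, A (p i), forall i, 0 <= w i, \sum_i w i = 1
      & x = \sum_i w i *: p i].

Definition lattice_polytope (P : pset) : Prop :=
  exists S : seq 'rV[R]_d, (forall s, s \in S -> integral s) /\
    forall x, P x <-> conv (fun y => y \in S) x.

Definition interior (P : pset) (x : 'rV[R]_d) : Prop :=
  exists2 eps : R, 0 < eps &
    forall z : 'rV[R]_d, (forall i, `|z ord0 i| <= eps) -> P (x + z).
Definition boundary (P : pset) (x : 'rV[R]_d) : Prop := P x /\ ~ interior P x.
Definition full_dim (P : pset) : Prop := exists x, interior P x.

(* faces: intersections with supporting hyperplanes (P itself and the
   empty set included) *)
Definition face (P F : pset) : Prop :=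
  exists (y : 'rV[R]_d) (c : R),
    (forall x, P x -> c <= pairing x y) /\
    (forall x, F x <-> P x /\ pairing x y = c).

Definition set_sub (A B : pset) : Prop := forall x, A x -> B x.
Definition set_eq (A B : pset) : Prop := forall x, A x <-> B x.

Definition facet (P F : pset) : Prop :=
  [/\ face P F, (exists x, F x), (exists x, P x /\ ~ F x) &
      forall G, face P G -> set_sub F G -> set_eq G F \/ set_eq G P].

Definition min_face (P : pset) (v : 'rV[R]_d) (G : pset) : Prop :=
  [/\ face P G, G v & forall F, face P F -> F v -> set_sub G F].

(* Delta is reflexive with (duplicate-free) list e of its primitive inward
   facet normals: Delta = {x : <x,e_k> >= -1}. *)
Definition reflexive_polytope (Delta : pset) (e : seq 'rV[R]_d) : Prop :=
  [/\ lattice_polytope Delta, full_dim Delta, uniq e,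
      (forall y, y \in e -> primitive y) &
      [/\ (forall y, y \in e -> facet Delta (fun x => Delta x /\ pairing x y = -1)),
          (forall F, facet Delta F -> exists2 y, y \in e &
              set_eq F (fun x => Delta x /\ pairing x y = -1))
        & forall x, Delta x <-> forall y, y \in e -> -1 <= pairing x y]].

(* phi_P(y) = c, where phi_P(y) = - min_{x in P} <x,y> *)
Definition phi_is (P : pset) (y : 'rV[R]_d) (c : R) : Prop :=
  (exists2 x, P x & pairing x y = - c) /\ (forall x, P x -> - c <= pairing x y).

Definition nef_partition (Delta : pset) (e : seq 'rV[R]_d) (r : nat)
    (D : 'I_r -> pset) : Prop :=
  [/\ forall j, lattice_polytope (D j),
      (forall x, Delta x <-> exists xs : 'I_r -> 'rV[R]_d,
          (forall j, D j (xs j)) /\ x = \sum_j xs j)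
    & forall j y, y \in e -> phi_is (D j) y 0 \/ phi_is (D j) y 1].

Definition dual_poly (e : seq 'rV[R]_d) : pset := conv (fun y => y \in e).

Definition nabla (e : seq 'rV[R]_d) (r : nat) (D : 'I_r -> pset) (j : 'I_r)
  : pset := conv (fun y => y = 0 \/ (y \in e /\ phi_is (D j) y 1)).

End Polytopes.

(* A boundary point [v] of [Delta^*] has a supporting hyperplane; as [Delta] is
   bounded, its normal can be scaled to a point [x] of [Delta] with
   [<x, v> = -1].  Split [x = x_1 + ... + x_r] along the nef-partition and move
   each [x_j] to a lattice vertex [s_j] of [Delta_j] not increasing [<., v>]:
   the integers [<s_j, v>] sum to at most [-1], so [<s_i, v> <= -1] for some
   [i].  As [<s_i, e_k> >= -phi_i(e_k) >= -1], the hyperplane [<., s_i> = -1]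
   supports [Delta^*] at [v], hence contains [Gamma(v)], and every [e_k] in
   [Gamma(v)] has [<s_i, e_k> = -1], forcing [phi_i(e_k) = 1], i.e.
   [e_k \in nabla_i].  A functional cutting [Gamma(v)] out of [Delta^*], plus
   a large multiple of [s_i], cuts it out of [nabla_i]. *)

From HB Require Import structures.
From mathcomp Require Import all_boot all_order all_algebra.
From mathcomp Require Import reals.
From mathcomp Require Import lra zify.
From Stdlib Require Import Classical.
Set Implicit Arguments. Unset Strict Implicit. Unset Printing Implicit Defensive.
Import Order.TTheory GRing.Theory Num.Theory.
Local Open Scope ring_scope.

Section Pairing.
Variables (R : realType) (d : nat).
Implicit Types (x y z : 'rV[R]_d).
Local Notation pairing := (@pairing R d).

Lemma pairingC x y : pairing x y = pairing y x.
Proof. by apply: eq_bigr => i _; rewrite mulrC. Qed.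

Lemma pairingDl x y z : pairing (x + y) z = pairing x z + pairing y z.
Proof. by rewrite /pairing -big_split; apply: eq_bigr => i _; rewrite mxE mulrDl. Qed.

Lemma pairingZl a x z : pairing (a *: x) z = a * pairing x z.
Proof. by rewrite /pairing mulr_sumr; apply: eq_bigr => i _; rewrite mxE mulrA. Qed.

Lemma pairing0l z : pairing 0 z = 0.
Proof. by rewrite -(scale0r 0) pairingZl mul0r. Qed.

Lemma pairingBl x y z : pairing (x - y) z = pairing x z - pairing y z.
Proof. by rewrite pairingDl -scaleN1r pairingZl mulN1r. Qed.

Lemma pairingDr x y z : pairing z (x + y) = pairing z x + pairing z y.
Proof. by rewrite !(pairingC z) pairingDl. Qed.

Lemma pairingZr a x z : pairing z (a *: x) = a * pairing z x.
Proof. by rewrite !(pairingC z) pairingZl. Qed.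

Lemma pairing0r z : pairing z 0 = 0.
Proof. by rewrite pairingC pairing0l. Qed.

Lemma pairingBr x y z : pairing z (x - y) = pairing z x - pairing z y.
Proof. by rewrite !(pairingC z) pairingBl. Qed.

Lemma pairing_suml (I : Type) (r : seq I) (P : pred I) (F : I -> 'rV[R]_d) z :
  pairing (\sum_(i <- r | P i) F i) z = \sum_(i <- r | P i) pairing (F i) z.
Proof. by elim/big_rec2: _ => [|i y1 y2 _ <-]; rewrite ?pairing0l ?pairingDl. Qed.

Lemma pairing_self_gt0 x : x != 0 -> 0 < pairing x x.
Proof.
have sq_ge0 i : true -> 0 <= x ord0 i * x ord0 i by rewrite -expr2 sqr_ge0.
move=> x_neq0; rewrite lt_def sumr_ge0 // andbT.
apply: contra x_neq0 => /eqP x0; apply/eqP/rowP => i.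
have := psumr_eq0P sq_ge0 x0 (i := i) isT.
by move/eqP; rewrite mulf_eq0 orbb (ord1 ord0) mxE => /eqP.
Qed.

Lemma pairing_convex_comb_ge n (p : 'I_n -> 'rV[R]_d) (w : 'I_n -> R) y c :
  (forall i, 0 <= w i) -> \sum_i w i = 1 -> (forall i, c <= pairing (p i) y) ->
  c <= pairing (\sum_i w i *: p i) y.
Proof.
move=> w_ge0 w_sum1 cp; rewrite pairing_suml -[c]mul1r -w_sum1 mulr_suml.
by apply: ler_sum => i _; rewrite pairingZl ler_wpM2l.
Qed.

Lemma pairing_convex_comb_eq n (p : 'I_n -> 'rV[R]_d) (w : 'I_n -> R) y c :
  \sum_i w i = 1 -> (forall i, w i != 0 -> pairing (p i) y = c) ->
  pairing (\sum_i w i *: p i) y = c.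
Proof.
move=> w_sum1 cp; rewrite pairing_suml -[c]mul1r -w_sum1 mulr_suml.
apply: eq_bigr => i _; rewrite pairingZl.
by have [->|/cp ->] := eqVneq (w i) 0; rewrite ?mul0r.
Qed.

Lemma pairing_convex_comb_supp n (p : 'I_n -> 'rV[R]_d) (w : 'I_n -> R) y c :
  (forall i, 0 <= w i) -> \sum_i w i = 1 -> (forall i, c <= pairing (p i) y) ->
  pairing (\sum_i w i *: p i) y = c -> forall i, w i != 0 -> pairing (p i) y = c.
Proof.
move=> w_ge0 w_sum1 cp E i wi_neq0.
have gap_ge0 j : 0 <= w j * (pairing (p j) y - c) by rewrite mulr_ge0 ?subr_ge0.
have gap0 : \sum_j w j * (pairing (p j) y - c) = 0.
  under eq_bigr do rewrite mulrBr -pairingZl.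
  by rewrite sumrB -pairing_suml -mulr_suml w_sum1 mul1r E subrr.
have := psumr_eq0P (fun j _ => gap_ge0 j) gap0 (i := i) isT.
by move/eqP; rewrite mulf_eq0 (negbTE wi_neq0) subr_eq0 => /eqP.
Qed.

End Pairing.

Section ConvexHull.
Variables (R : realType) (d : nat) (A : pset R d).
Local Notation pairing := (@pairing R d).

Lemma sub_conv x : A x -> conv A x.
Proof.
move=> Ax; exists 1%N, (fun=> x), (fun=> 1).
by split=> //; rewrite big_ord1 ?scale1r.
Qed.

Lemma conv_pairing_ge y c x :
  (forall q, A q -> c <= pairing q y) -> conv A x -> c <= pairing x y.
Proof.
move=> cA [n [p [w [Ap w_ge0 w_sum1 ->]]]].
by apply: pairing_convex_comb_ge => // i; apply: cA.
Qed.

Lemma conv_min_pairing x y : conv A x -> exists2 q, A q & pairing q y <= pairing x y.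
Proof.
case=> [[|n] [p [w [Ap w_ge0 w_sum1 ->]]]].
  by move: w_sum1; rewrite big_ord0 => /eqP; rewrite eq_sym oner_eq0.
case: (arg_minP (fun i => pairing (p i) y) (isT : xpredT ord0)) => i _ i_min.
by exists (p i) => //; apply: pairing_convex_comb_ge => // j; apply: i_min.
Qed.

Lemma conv_comb_cat n1 n2 (p1 : 'I_n1 -> 'rV[R]_d) (p2 : 'I_n2 -> 'rV[R]_d)
    (w1 : 'I_n1 -> R) (w2 : 'I_n2 -> R) :
  (forall i, A (p1 i)) -> (forall i, A (p2 i)) ->
  (forall i, 0 <= w1 i) -> (forall i, 0 <= w2 i) -> \sum_i w1 i + \sum_i w2 i = 1 ->
  conv A (\sum_i w1 i *: p1 i + \sum_i w2 i *: p2 i).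
Proof.
move=> Ap1 Ap2 w1_ge0 w2_ge0 w_sum1.
exists (n1 + n2)%N, (fun i => match split i with inl j => p1 j | inr j => p2 j end),
  (fun i => match split i with inl j => w1 j | inr j => w2 j end).
split; [by move=> i; case: split.. | |].
- by rewrite big_split_ord /=; under eq_bigr do rewrite (unsplitK (inl _));
    under [X in _ + X]eq_bigr do rewrite (unsplitK (inr _)).
- by rewrite big_split_ord /=; under [in RHS]eq_bigr do rewrite (unsplitK (inl _));
    under [X in _ = _ + X]eq_bigr do rewrite (unsplitK (inr _)).
Qed.

Lemma conv_of_support n (p : 'I_n -> 'rV[R]_d) (w : 'I_n -> R) :
  (forall i, 0 <= w i) -> \sum_i w i = 1 ->
  (forall i, w i != 0 -> A (p i)) -> conv A (\sum_i w i *: p i).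
Proof.
move=> w_ge0 w_sum1 Ap.
have [i0 wi0|w0] := pickP (fun i => w i != 0); last first.
  move: w_sum1; rewrite big1 => [/eqP|i _]; last exact/eqP/negbFE.
  by rewrite eq_sym oner_eq0.
exists n, (fun i => if w i == 0 then p i0 else p i), w; split => //.
- by move=> i; case: eqP => [_|/eqP]; apply: Ap.
- by apply: eq_bigr => i _; case: eqP => // ->; rewrite !scale0r.
Qed.

End ConvexHull.

Section LatticePolytopes.
Variables (R : realType) (d : nat).
Local Notation pairing := (@pairing R d).
Implicit Types (P : pset R d) (x y : 'rV[R]_d).

Lemma integral_pairing x y :
  integral x -> integral y -> exists k : int, pairing x y = k%:~R.
Proof.
move=> x_int y_int; rewrite /pairing.
elim/big_rec: _ => [|i _ _ [k ->]]; first by exists 0.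
have [[a ->] [b ->]] := (x_int i, y_int i).
by exists (a * b + k); rewrite intrD intrM.
Qed.

Lemma lattice_polytope_min_vertex P x y : lattice_polytope P -> P x ->
  exists s, [/\ integral s, P s & pairing s y <= pairing x y].
Proof.
move=> [S [S_int PS]] /PS /(conv_min_pairing y) [s sS s_min].
by exists s; split=> //; [apply: S_int | apply/PS/sub_conv].
Qed.

Lemma lattice_polytope_bounded P : lattice_polytope P ->
  exists B : 'I_d -> R, forall x, P x -> forall i, `|x ord0 i| <= B i.
Proof.
move=> [S [_ PS]]; exists (fun i => \sum_(s <- S) `|s ord0 i|) => x /PS + i.
have mem_le s : s \in S -> `|s ord0 i| <= \sum_(s' <- S) `|s' ord0 i|.
  elim: S {PS} => // a S IH; rewrite in_cons big_cons => /orP [/eqP ->|/IH].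
    by rewrite lerDl sumr_ge0.
  by move/le_trans; apply; rewrite lerDr.
move=> [n [p [w [Sp w_ge0 w_sum1 ->]]]].
rewrite summxE (le_trans (ler_norm_sum _ _ _)) //.
rewrite -[X in _ <= X]mul1r -w_sum1 mulr_suml.
by apply: ler_sum => j _; rewrite mxE normrM ger0_norm // ler_wpM2l ?mem_le.
Qed.

Lemma lattice_polytope_no_ray P y : lattice_polytope P -> y != 0 ->
  exists2 t, 0 <= t & ~ P (t *: y).
Proof.
move=> /lattice_polytope_bounded [B P_bounded] y_neq0.
have [i yi_neq0] : exists i, y ord0 i != 0.
  apply/existsP; apply: contraR y_neq0 => /existsPn y0.
  by apply/eqP/rowP => i; rewrite mxE; apply/eqP/negPn/y0.
have yi_gt0 : 0 < `|y ord0 i| by rewrite normr_gt0.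
exists ((`|B i| + 1) / `|y ord0 i|) => [|/P_bounded/(_ i)].
  by rewrite divr_ge0 // addr_ge0.
rewrite mxE normrM ger0_norm ?divr_ge0 ?addr_ge0 // divfK ?lt0r_neq0 //.
by have := ler_norm (B i); lra.
Qed.

End LatticePolytopes.

Section SupportingHyperplane.
Variables (R : realType) (d : nat).
Local Notation pairing := (@pairing R d).

(* Induction on the number of generators: if the separating [y] for the last
   generators fails for [a 0], project everything along [a 0] onto the
   hyperplane [pairing _ y = 0] and separate there. *)
Lemma farkas n : forall (a : nat -> 'rV[R]_d) (b : 'rV[R]_d),
  (exists mu : nat -> R, (forall k, 0 <= mu k) /\ b = \sum_(k < n) mu k *: a k) \/
  (exists y, (forall k, (k < n)%N -> 0 <= pairing (a k) y) /\ pairing b y < 0).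
Proof.
elim: n => [|n IH] a b.
  have [->|b_neq0] := eqVneq b 0; first by left; exists (fun=> 0); rewrite big_ord0.
  right; exists (- b); split=> //.
  by rewrite -scaleN1r pairingZr mulN1r oppr_lt0 pairing_self_gt0.
have [[mu [mu_ge0 Eb]]|[y [y_sep by_lt0]]] := IH (fun k => a k.+1) b.
  left; exists (fun k => if k is k'.+1 then mu k' else 0); split; first by case.
  by rewrite big_ord_recl /= scale0r add0r Eb.
have [a0y_ge0|a0y_lt0] := leP 0 (pairing (a 0%N) y).
  by right; exists y; split=> //; case=> // k /y_sep.
set al := pairing (a 0%N) y; have al_neq0 : al != 0 by rewrite lt_eqF.
have [[mu [mu_ge0 Eb]]|[y' [y'_sep by'_lt0]]] :=
  IH (fun k => a k.+1 - (pairing (a k.+1) y / al) *: a 0%N)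
     (b - (pairing b y / al) *: a 0%N).
  left; exists (fun k => if k is k'.+1 then mu k' else
     pairing b y / al - \sum_(i < n) mu i * (pairing (a i.+1) y / al)); split.
    case=> //; rewrite subr_ge0 (@le_trans _ _ 0) //.
      apply: sumr_le0 => i _; rewrite mulr_ge0_le0 //.
      by rewrite ler_ndivrMr // mul0r y_sep.
    by rewrite ltW // ltr_ndivlMr // mul0r.
  rewrite big_ord_recl /=; set cb := pairing b y / al.
  rewrite -[b](subrK (cb *: a 0%N)) Eb.
  under [X in X + _ = _]eq_bigr do rewrite scalerBr scalerA.
  rewrite sumrB -scaler_suml /bump /=.
  under [X in _ = _ + X]eq_bigr do rewrite add0n.
  by rewrite scalerBl [RHS]addrC addrA addrAC.
have swap u w : u / al * w = w / al * u by rewrite mulrAC [u * w]mulrC mulrAC.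
right; exists (y' - (pairing (a 0%N) y' / al) *: y); split.
  case=> [_|k]; rewrite pairingBr pairingZr; first by rewrite -/al divfK // subrr.
  by move=> /y'_sep; rewrite pairingBl pairingZl swap.
by move: by'_lt0; rewrite pairingBl pairingZl pairingBr pairingZr swap.
Qed.

(* Each [z] is split coordinatewise into [|z_i|] times [+e_i] or [-e_i]. *)
Lemma cone_absorbs_box m (a : nat -> 'rV[R]_d) :
  (forall (i : 'I_d) (b : bool), exists mu : nat -> R, (forall k, 0 <= mu k) /\
     (if b then 1 else -1) *: 'e_i = \sum_(k < m) mu k *: a k) ->
  exists2 eps, 0 < eps & forall z : 'rV[R]_d, (forall i, `|z ord0 i| <= eps) ->
    exists c : nat -> R, [/\ forall k, 0 <= c k, \sum_(k < m) c k <= 1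
                           & z = \sum_(k < m) c k *: a k].
Proof.
move=> signed_basis.
have /fin_all_exists[mu mu_spec] : forall ib : 'I_d * bool,
    exists mu : nat -> R, (forall k, 0 <= mu k) /\
      (if ib.2 then 1 else -1) *: 'e_ib.1 = \sum_(k < m) mu k *: a k.
  by case=> i b; apply: signed_basis.
have mu_ge0 i b k : 0 <= mu (i, b) k by case: (mu_spec (i, b)).
set M := \sum_(k < m) \sum_(i < d) (mu (i, true) k + mu (i, false) k).
have M_ge0 : 0 <= M by do 2![apply: sumr_ge0 => ? _]; apply: addr_ge0.
exists (M + 1)^-1; first by rewrite invr_gt0 ltr_wpDl.
move=> z z_small; pose s i := 0 <= z ord0 i.
exists (fun k => \sum_(i < d) `|z ord0 i| * mu (i, s i) k); split.
- by move=> k; apply: sumr_ge0 => i _; rewrite mulr_ge0.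
- apply: le_trans (_ : (M + 1)^-1 * M <= 1); last first.
    by rewrite ler_pdivrMl ?ltr_wpDl // mulr1 lerDl.
  rewrite mulr_sumr; apply: ler_sum => k _; rewrite mulr_sumr; apply: ler_sum => i _.
  apply: ler_pM; rewrite ?normr_ge0 ?mu_ge0 //.
  by rewrite /s; case: (0 <= _); rewrite ?lerDl ?lerDr mu_ge0.
- rewrite [LHS]row_sum_delta; under [RHS]eq_bigr do rewrite scaler_suml.
  rewrite [RHS]exchange_big /=; apply: eq_bigr => i _.
  have zi : z ord0 i = `|z ord0 i| * (if s i then 1 else -1).
    rewrite /s; case: leP => [/ger0_norm|/ltW/ler0_norm] ->;
    by rewrite ?mulr1 ?mulrN1 ?opprK.
  case: (mu_spec (i, s i)) => _ /= E.
  by rewrite {1}zi -scalerA E scaler_sumr; apply: eq_bigr => k _; rewrite scalerA.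
Qed.

Lemma conv_add_cone (A : pset R d) m (q : nat -> 'rV[R]_d) (c : nat -> R) x :
  conv A x -> (forall k, (k < m)%N -> A (q k)) ->
  (forall k, 0 <= c k) -> \sum_(k < m) c k <= 1 ->
  conv A (x + \sum_(k < m) c k *: (q k - x)).
Proof.
move=> [n [p [w [Ap w_ge0 w_sum1 ->]]]] Aq c_ge0 c_le1.
set C := \sum_(k < m) c k; set v := \sum_i w i *: p i.
have -> : v + \sum_(k < m) c k *: (q k - v)
    = \sum_i ((1 - C) * w i) *: p i + \sum_(k < m) c k *: q k.
  under eq_bigr do rewrite scalerBr.
  rewrite sumrB -scaler_suml -/C addrA addrAC -{1}[v]scale1r -scalerBl scaler_sumr.
  by under eq_bigr do rewrite scalerA.
apply: conv_comb_cat => //.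
- by move=> k; apply: Aq.
- by move=> i; rewrite mulr_ge0 ?subr_ge0.
- by rewrite -mulr_sumr w_sum1 mulr1 subrK.
Qed.

Lemma conv_boundary_support (e : seq 'rV[R]_d) v :
  conv (fun y => y \in e) v -> ~ interior (conv (fun y => y \in e)) v ->
  exists2 y, y != 0 & forall q, q \in e -> pairing v y <= pairing q y.
Proof.
move=> ev v_bd; apply: NNPP => no_support; apply: v_bd.
have [|eps eps_gt0 box] := @cone_absorbs_box (size e) (fun k => e`_k - v).
  move=> i b; have [//|[y [y_sep y_neg]]] := farkas (size e) (fun k => e`_k - v)
                                              ((if b then 1 else -1) *: 'e_i).
  exfalso; apply: no_support; exists y.
    by apply: contraTneq y_neg => ->; rewrite pairing0r ltxx.
  move=> q qe; rewrite -subr_ge0 -pairingBl -(nth_index 0 qe).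
  by apply: y_sep; rewrite index_mem.
exists eps => // z /box [c [c_ge0 c_le1 ->]].
by apply: conv_add_cone => // k k_lt; exact: mem_nth.
Qed.

End SupportingHyperplane.

(* The supporting normal [y] has [pairing v y < 0], since otherwise the ray
   [R_+ y] would lie in the bounded [Delta]. *)
Lemma reflexive_boundary_tight (R : realType) d (Delta : pset R d) e v :
  lattice_polytope Delta ->
  (forall x, Delta x <-> forall q, q \in e -> -1 <= pairing x q) ->
  boundary (dual_poly e) v -> exists2 x, Delta x & pairing x v = -1.
Proof.
move=> Delta_lattice DeltaE [ev v_bd].
have [y y_neq0 y_supp] := conv_boundary_support ev v_bd.
set c := pairing v y.
have c_lt0 : c < 0.
  rewrite ltNge; apply/negP => c_ge0.
  have [t t_ge0] := lattice_polytope_no_ray Delta_lattice y_neq0; apply.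
  apply/DeltaE => q qe; rewrite pairingZl pairingC.
  by rewrite (le_trans _ (mulr_ge0 t_ge0 (le_trans c_ge0 (y_supp q qe)))) ?lerN10.
have inv_ge0 : 0 <= (- c)^-1 by rewrite invr_ge0 oppr_ge0 ltW.
have N1E : -1 = (- c)^-1 * c by rewrite invrN mulNr mulVf ?lt_eqF.
exists ((- c)^-1 *: y); last by rewrite pairingZl pairingC -/c N1E.
by apply/DeltaE => q qe; rewrite pairingZl pairingC N1E ler_wpM2l ?y_supp.
Qed.

Lemma exists_intr_le_N1 (R : realDomainType) (I : finType) (z : I -> R) :
  (forall i, exists k : int, z i = k%:~R) -> \sum_i z i <= -1 -> exists i, z i <= -1.
Proof.
move=> z_int sum_le; have [i zi|z_gt] := pickP (fun i => z i <= -1); first by exists i.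
suff : 0 <= \sum_i z i by lra.
apply: sumr_ge0 => i _; have [k zk] := z_int i.
by move: (z_gt i); rewrite zk -(intrN R 1) ler_int ler0z; lia.
Qed.

Section NefPartition.
Variables (R : realType) (d r : nat) (Delta : pset R d) (e : seq 'rV[R]_d)
  (D : 'I_r -> pset R d).
Local Notation pairing := (@pairing R d).
Hypothesis nef : nef_partition Delta e D.

Lemma nef_pairing_ge i s q : D i s -> q \in e -> -1 <= pairing s q.
Proof.
move=> Dis qe; case: nef => _ _ /(_ i q qe) [[_ phi0]|[_ phi1]]; last exact: phi1.
by rewrite (le_trans _ (phi0 _ Dis)) // oppr0 lerN10.
Qed.

Lemma nef_pairing_eqN1 i s q : D i s -> q \in e -> pairing s q = -1 ->
  phi_is (D i) q 1.
Proof.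
move=> Dis qe sq; case: nef => _ _ /(_ i q qe) [[_ phi0]|//].
by have := phi0 _ Dis; rewrite sq oppr0 ler0N1.
Qed.

Lemma nef_vertex_tight v x : integral v -> Delta x -> pairing x v = -1 ->
  exists i s, D i s /\ pairing s v <= -1.
Proof.
case: nef => D_lattice DeltaE _ v_int /DeltaE [xs [Dxs ->]] xv.
have /fin_all_exists[s s_spec] j := lattice_polytope_min_vertex v (D_lattice j) (Dxs j).
have sum_le : \sum_j pairing (s j) v <= -1.
  by rewrite -xv pairing_suml; apply: ler_sum => j _; case: (s_spec j).
have [j|i si] := exists_intr_le_N1 _ sum_le.
  by have [s_int _ _] := s_spec j; apply: integral_pairing.
by exists i, (s i); case: (s_spec i).
Qed.

End NefPartition.

Section FaceTransfer.
Variables (R : realType) (d : nat) (A B : pset R d) (s : 'rV[R]_d).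
Local Notation pairing := (@pairing R d).
Hypothesis B_sub : forall q, B q -> q = 0 \/ A q.
Hypothesis B_ge : forall q, B q -> -1 <= pairing q s.
Hypothesis A_tight : forall q, A q -> pairing q s = -1 -> B q.

(* If [G] is cut out of [conv A] by [pairing _ g = cg], then it is cut out of
   [conv B] by [pairing _ (t *: s + g) = cg - t] for [t] large enough that the
   extra point [0] stays strictly above this level. *)
Lemma face_conv_tight G : face (conv A) G -> (forall p, G p -> pairing p s = -1) ->
  face (conv B) G.
Proof.
move=> [g [cg [g_ge GE]]] G_tight; pose t : R := `|cg| + 1.
have cg_lt : cg < t by rewrite /t; have := ler_norm cg; lra.
have t_ge0 : 0 <= t by rewrite /t addr_ge0.
have gen_ge q : B q -> cg - t <= pairing q (t *: s + g) /\
    (pairing q (t *: s + g) = cg - t -> A q /\ pairing q g = cg).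
  move=> Bq; case: (B_sub Bq) => [->|Aq].
    by rewrite pairing0l; split=> [|E]; lra.
  have qg := g_ge _ (sub_conv Aq); have qs := B_ge Bq.
  have ts : - t <= t * pairing q s by rewrite -mulrN1 ler_wpM2l.
  by rewrite pairingDr pairingZr; split=> [|E]; [lra | split=> //; nra].
exists (t *: s + g), (cg - t); split=> [p|p].
  by apply: conv_pairing_ge => q /gen_ge [].
split=> [Gp|[[n [q [w [Bq w_ge0 w_sum1 Ep]]]] p_tight]].
  have [[n [q [w [Aq w_ge0 w_sum1 Ep]]] pg]] := (GE p).1 Gp; split.
    rewrite Ep; apply: conv_of_support => // j wj; apply: A_tight (Aq j) _.
    apply/G_tight/GE; split; first exact/sub_conv.
    have qg k : cg <= pairing (q k) g by apply/g_ge/sub_conv.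
    by apply: (pairing_convex_comb_supp w_ge0 w_sum1 qg) => //; rewrite -Ep.
  by rewrite pairingDr pairingZr G_tight // pg; lra.
have q_tight j : w j != 0 -> A (q j) /\ pairing (q j) g = cg.
  move=> wj; apply: (gen_ge _ (Bq j)).2.
  have qh k : cg - t <= pairing (q k) (t *: s + g) by case: (gen_ge _ (Bq k)).
  by apply: (pairing_convex_comb_supp w_ge0 w_sum1 qh) => //; rewrite -Ep.
apply/GE; rewrite Ep; split.
  by apply: conv_of_support => // j /q_tight [].
by apply: pairing_convex_comb_eq => // j /q_tight [].
Qed.

End FaceTransfer.

Theorem mainTheorem10 (R : realType) (d r : nat) (Delta : pset R d)
    (e : seq 'rV[R]_d) (D : 'I_r -> pset R d) (v : 'rV[R]_d) (G : pset R d) :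
  reflexive_polytope Delta e ->
  nef_partition Delta e D ->
  integral v ->
  boundary (dual_poly e) v ->
  min_face (dual_poly e) v G ->
  exists i : 'I_r, face (nabla e D i) G.
Proof.
move=> [Delta_lattice _ _ _ [_ _ DeltaE]] nef v_int v_bd [G_face _ G_min].
have [x Dx xv] := reflexive_boundary_tight Delta_lattice DeltaE v_bd.
have [i [s [Dis sv]]] := nef_vertex_tight nef v_int Dx xv.
have e_ge q : q \in e -> -1 <= pairing q s.
  by move=> qe; rewrite pairingC (nef_pairing_ge nef Dis qe).
have ev : dual_poly e v by case: v_bd.
have vs : pairing v s = -1.
  by apply/eqP; rewrite eq_le (conv_pairing_ge e_ge ev) andbT pairingC.
have s_face : face (dual_poly e) (fun p => dual_poly e p /\ pairing p s = -1).
  by exists s, (-1); split=> // p; apply: conv_pairing_ge.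
have G_tight p : G p -> pairing p s = -1 by move/(G_min _ s_face (conj ev vs)) => [].
exists i; apply: face_conv_tight G_face G_tight.
- by move=> q [->|[qe _]]; [left | right].
- by move=> q [->|[qe _]]; [rewrite pairing0l lerN10 | apply: e_ge].
- move=> q qe qs; right; split=> //.
  rewrite pairingC in qs; exact: (nef_pairing_eqN1 nef Dis qe qs).
Qed.
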